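(* Setting: $\mathcal{I}$ and $\mathcal{J}$ are finite sets; for each $i\in\mathcal{I}$, $\mathcal{A}_i$ is a finite set with $|\mathcal{A}_i|\ge2$; for each $j\in\mathcal{J}$, $\mathcal{I}_j\subseteq\mathcal{I}$, and $\mathcal{J}_i=\{j\in\mathcal{J}: i\in\mathcal{I}_j\}$. Let $\mathcal{L}=\{j\in\mathcal{J}:|\mathcal{I}_j|\ge2\}$ and $\mathcal{Y}=\{i\in\mathcal{I}:\exists j\in\mathcal{J}_i \text{ with } |\mathcal{I}_j|=1\}$. For $i\in\mathcal{Y}$ let $h_i:\mathcal{A}_i\to(0,\infty)$, and for each $j\in\mathcal{L}$ let $\mathcal{B}_j\subseteq\prod_{i\in\mathcal{I}_j}\mathcal{A}_i$ (elements written $\mathbf{b}=(b_i)_{i\in\mathcal{I}_j}$). Let $\mathcal{B}=\{\mathbf{x}\in\prod_{i\in\mathcal{I}}\mathcal{A}_i:(x_i)_{i\in\mathcal{I}_j}\in\mathcal{B}_j\ \forall j\in\mathcal{L}\}$, and assume $\mathbf{P}_{\mathcal{Y}}:\mathbf{x}\mapsto(x_i)_{i\in\mathcal{Y}}$ is injective on $\mathcal{B}$. For each $i\in\mathcal{I}$ fix $\alpha_i\in\mathcal{A}_i$, let $\mathcal{A}_i^-=\mathcal{A}_i\setminus\{\alpha_i\}$, and for $i\in\mathcal{I}\setminus\mathcal{Y}$ fix $t_i\in\mathcal{J}_i$. Relaxed LP A (variables $\tilde g_i^{(\alpha)}$ for $i\in\mathcal{Y},\alpha\in\mathcal{A}_i^-$,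 and $p_{j,\mathbf{b}}$ for $j\in\mathcal{L},\mathbf{b}\in\mathcal{B}_j$): maximize $\sum_{i\in\mathcal{Y}}\sum_{\alpha\in\mathcal{A}_i^-}\log\frac{h_i(\alpha)}{h_i(\alpha_i)}\,\tilde g_i^{(\alpha)}$ over the polytope $\tilde{\mathcal{Q}}$ given by: $p_{j,\mathbf{b}}\ge0$ for all $j\in\mathcal{L},\mathbf{b}\in\mathcal{B}_j$; $\sum_{\mathbf{b}\in\mathcal{B}_j}p_{j,\mathbf{b}}=1$ for all $j\in\mathcal{L}$; $\tilde g_i^{(\alpha)}=\sum_{\mathbf{b}\in\mathcal{B}_j,b_i=\alpha}p_{j,\mathbf{b}}$ for all $i\in\mathcal{Y}$, $j\in\mathcal{J}_i\cap\mathcal{L}$, $\alpha\in\mathcal{A}_i^-$; and $\sum_{\mathbf{b}\in\mathcal{B}_j,b_i=\alpha}p_{j,\mathbf{b}}=\sum_{\mathbf{b}\in\mathcal{B}_{t_i},b_i=\alpha}p_{t_i,\mathbf{b}}$ for all $i\in\mathcal{I}\setminus\mathcal{Y}$, $j\in\mathcal{J}_i\setminus\{t_i\}$, $\alpha\in\mathcal{A}_i^-$. If the LP solution $(\tilde{\mathbf{g}}_{\mathrm{out}},\mathbf{p})$ is integral (all coordinates integers), the receiver outputs $\mathbf{x}_{\mathrm{out}}=\mathbf{P}_{\mathcal{Y}}^{-1}(\tilde{\boldsymbol{\Xi}}^{-1}(\tilde{\mathbf{g}}_{\mathrm{out}}))$, where $\tilde{\boldsymbol{\Xi}}(\mathbf{x}_{\mathcal{Y}})=(([\gamma=x_i])_{\gamma\in\mathcal{A}_i^-})_{i\in\mathcal{Y}}$;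 otherwise it reports a receiver failure. Relaxed LP B (variables $g_i^{(\alpha)}$ for $i\in\mathcal{I},\alpha\in\mathcal{A}_i$, and $p_{j,\mathbf{b}}$ as before): maximize $\sum_{i\in\mathcal{Y}}\sum_{\alpha\in\mathcal{A}_i}\log h_i(\alpha)\,g_i^{(\alpha)}$ over the polytope $\mathcal{Q}$ given by: $p_{j,\mathbf{b}}\ge0$; $\sum_{\mathbf{b}\in\mathcal{B}_j}p_{j,\mathbf{b}}=1$ for all $j\in\mathcal{L}$; and $g_i^{(\alpha)}=\sum_{\mathbf{b}\in\mathcal{B}_j,b_i=\alpha}p_{j,\mathbf{b}}$ for all $j\in\mathcal{L}$, $i\in\mathcal{I}_j$, $\alpha\in\mathcal{A}_i$. If the LP solution $(\bar{\mathbf{g}}_{\mathrm{out}},\mathbf{p})$ is integral, the receiver outputs $\mathbf{x}_{\mathrm{out}}=\bar{\boldsymbol{\Xi}}^{-1}(\bar{\mathbf{g}}_{\mathrm{out}})$, where $\bar{\boldsymbol{\Xi}}(\mathbf{x})=(([\gamma=x_i])_{\gamma\in\mathcal{A}_i})_{i\in\mathcal{I}}$; otherwise it reports a receiver failure. Claim: LP B produces the same output (configuration or receiver failure) as LP A. Moreover, if the receiver output is a configuration, then it is the optimum configuration, i.e. $\mathbf{x}_{\mathrm{out}}\in\mathcal{B}$ and $\mathbf{x}_{\mathrm{out}}=\mathbf{x}_{\mathrm{opt}}$, where $\mathbf{x}_{\mathrm{opt}}$ maximizes $\sum_{i\in\mathcal{Y}}\log h_i(x_i)$ over $\mathbf{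x}\in\mathcal{B}$.
   Context: $[P]$ denotes $1$ if the predicate $P$ holds and $0$ otherwise. The setting models maximization of a product of functions $u(\mathbf{x})=\prod_{i\in\mathcal{Y}}h_i(x_i)\prod_{j\in\mathcal{L}}[(x_i)_{i\in\mathcal{I}_j}\in\mathcal{B}_j]$ described by a factor graph, where pendant (degree-one) factor nodes are collected into the positive functions $h_i$ and every non-pendant factor node $j\in\mathcal{L}$ is the indicator function of a local behaviour $\mathcal{B}_j$; the optimum configuration $\mathbf{x}_{\mathrm{opt}}$ maximizes $u$. $\mathbf{P}_{\mathcal{Y}}^{-1}$ denotes the inverse of $\mathbf{P}_{\mathcal{Y}}$ restricted to $\mathcal{B}$. *)

From HB Require Import structures.
From mathcomp Require Import all_boot all_order all_algebra.
From mathcomp Require Import all_classical all_reals all_analysis.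
Set Implicit Arguments. Unset Strict Implicit. Unset Printing Implicit Defensive.
Import Order.TTheory GRing.Theory Num.Theory.
Local Open Scope ring_scope.

Section Setting.
Variable R : realType.
Variables (I J : finType) (A : I -> finType) (Ij : J -> {set I}).

Definition lconf (j : J) := {dffun forall k : {x : I | x \in Ij j}, A (val k)}.
Definition conf := forall i : I, A i.

(* b_i for i in I_j (None if i is not in I_j) *)
Definition lc_at (j : J) (b : lconf j) (i : I) : option (A i) :=
  (if i \in Ij j as c return ((i \in Ij j) = c -> option (A i))
   then fun H => Some (b (exist (fun x => x \in Ij j) i H))
   else fun _ => None) (erefl _).

Definition restr (j : J) (x : conf) : lconf j :=
  @finfun _ (fun k : {x : I | x \in Ij j} => A (val k)) (fun k => x (val k)).

Definition Lset : {set J} := [set j | (1 < #|Ij j|)%N].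
Definition Yset : {set I} := [set i | [exists j, (i \in Ij j) && (#|Ij j| == 1)%N]].
Definition Jset (i : I) : {set J} := [set j | i \in Ij j].

Variable Bj : forall j : J, {set lconf j}.

Definition inB (x : conf) : Prop := forall j, j \in Lset -> restr j x \in Bj j.

(* LP variables: coordinates outside the index sets of the paper are unused *)
Definition gvar := forall i : I, A i -> R.
Definition pvar := forall j : J, lconf j -> R.

(* h is only used for i in Y *)
Variables (h : gvar) (alpha : conf) (t : I -> J).
Arguments h : clear implicits.

Definition marg (p : pvar) (j : J) (i : I) (a : A i) : R :=
  \sum_(b in Bj j | lc_at b i == Some a) p j b.

Definition p_ok (p : pvar) : Prop :=
  (forall j, j \in Lset -> forall b, b \in Bj j -> 0 <= p j b) /\
  (forall j, j \in Lset -> \sum_(b in Bj j) p j b = 1).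

Definition QA (g : gvar) (p : pvar) : Prop :=
  p_ok p /\
  (forall i, i \in Yset -> forall j, j \in Jset i -> j \in Lset ->
     forall a : A i, a != alpha i -> g i a = marg p j a) /\
  (forall i, i \notin Yset -> forall j, j \in Jset i -> j != t i ->
     forall a : A i, a != alpha i -> marg p j a = marg p (t i) a).

Definition QB (g : gvar) (p : pvar) : Prop :=
  p_ok p /\
  (forall j, j \in Lset -> forall i, i \in Ij j ->
     forall a : A i, g i a = marg p j a).

Definition objA (g : gvar) : R :=
  \sum_(i in Yset) \sum_(a : A i | a != alpha i) ln (h i a / h i (alpha i)) * g i a.

Definition objB (g : gvar) : R :=
  \sum_(i in Yset) \sum_(a : A i) ln (h i a) * g i a.

Definition optA (g : gvar) (p : pvar) : Prop :=
  QA g p /\ forall g' p', QA g' p' -> objA g' <= objA g.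
Definition optB (g : gvar) (p : pvar) : Prop :=
  QB g p /\ forall g' p', QB g' p' -> objB g' <= objB g.

Definition p_int (p : pvar) : Prop :=
  forall j, j \in Lset -> forall b, b \in Bj j -> p j b \is a Num.int.

Definition intA (g : gvar) (p : pvar) : Prop :=
  (forall i, i \in Yset -> forall a : A i, a != alpha i -> g i a \is a Num.int) /\ p_int p.
Definition intB (g : gvar) (p : pvar) : Prop :=
  (forall i (a : A i), g i a \is a Num.int) /\ p_int p.

(* receiver outputs configuration x:
   LP A: x = P_Y^{-1}(Xi~^{-1}(g)), i.e. x in B and Xi~(P_Y x) = g;
   LP B: x = Xibar^{-1}(g), i.e. Xibar(x) = g. *)
Definition outA (g : gvar) (p : pvar) (x : conf) : Prop :=
  intA g p /\ inB x /\
  (forall i, i \in Yset -> forall a : A i, a != alpha i -> g i a = (x i == a)%:R).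
Definition outB (g : gvar) (p : pvar) (x : conf) : Prop :=
  intB g p /\ (forall i (a : A i), g i a = (x i == a)%:R).

Definition score (x : conf) : R := \sum_(i in Yset) ln (h i (x i)).

Definition is_opt_conf (x : conf) : Prop :=
  inB x /\ forall y, inB y -> score y <= score x.

End Setting.

(* Both relaxations have the same marginal polytope: on Q the coordinate
   gbar_i(alpha_i) is 1 - sum of the others, and the consistency constraints
   at alpha_i follow from those off alpha_i by normalisation of the p_j, so
   dropping the alpha-coordinates maps Q onto Q~.  This shift changes the
   objective only by the constant sum_i log h_i(alpha_i), so optimal points
   correspond, and so do integrality and decoded outputs.  An integral point
   of Q puts unit mass on one local configuration per factor; these agree on
   shared variables, so gbar is the indicator of a configuration of B.
   Conversely every x in B gives such an integral point with objective
   sum_i log h_i(x_i), whence the decoded configuration is optimal. *)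
From HB Require Import structures.
From mathcomp Require Import all_boot all_order all_algebra.
From mathcomp Require Import all_classical all_reals all_analysis.
From mathcomp Require Import ring lra.
Set Implicit Arguments. Unset Strict Implicit. Unset Printing Implicit Defensive.
Import Order.TTheory GRing.Theory Num.Theory.
Local Open Scope ring_scope.

Section Indicators.
Variable R : nzSemiRingType.

Lemma sumr_indicator (T : finType) (P : pred T) (b0 : T) :
  \sum_(b | P b) ((b == b0)%:R : R) = (P b0)%:R.
Proof.
rewrite big_mkcond /= (bigD1 b0) //= eqxx big1 ?addr0; first by case: (P b0).
by move=> b /negbTE ->; case: (P b).
Qed.

Lemma sumr_mul_indicator (T : finType) (F : T -> R) (x : T) :
  \sum_a F a * (x == a)%:R = F x.
Proof.
rewrite (bigD1 x) //= eqxx mulr1 big1 ?addr0 // => a.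
by rewrite eq_sym => /negbTE ->; rewrite mulr0.
Qed.

Lemma boolr_eq1 (b : bool) : (b%:R : R) = 1 -> b.
Proof. by case: b => // /esym/eqP; rewrite oner_eq0. Qed.

Lemma indicator_inj (T : eqType) (x y : T) :
  (forall a, ((x == a)%:R : R) = (y == a)%:R) -> x = y.
Proof. by move=> H; have := H y; rewrite eqxx => /boolr_eq1/eqP. Qed.

End Indicators.

Lemma int_gt0_ge1 (R : archiNumDomainType) (x : R) :
  x \is a Num.int -> 0 < x -> 1 <= x.
Proof.
move=> xZ x_gt0; rewrite -(ger0_norm (ltW x_gt0)).
by apply: norm_intr_ge1; rewrite ?lt0r_neq0.
Qed.

Section LocalConfigurations.
Variables (I J : finType) (A : I -> finType) (Ij : J -> {set I}).

Lemma lc_atE j (b : lconf A Ij j) i (Hi : i \in Ij j) :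
  lc_at b i = Some (b (exist _ i Hi)).
Proof.
rewrite /lc_at; move: (erefl (i \in Ij j)).
by case: {2 3}(i \in Ij j) => e /=; [rewrite (bool_irrelevance e Hi) | rewrite Hi in e].
Qed.

Lemma lc_at_restr j (x : conf A) i : i \in Ij j -> lc_at (restr Ij j x) i = Some (x i).
Proof. by move=> Hi; rewrite (lc_atE _ Hi) ffunE. Qed.

Lemma notin_Lset_Yset i j : i \in Ij j -> j \notin Lset Ij -> i \in Yset Ij.
Proof.
rewrite !inE -leqNgt => Hi Hle; apply/existsP; exists j; rewrite Hi /=.
have : (0 < #|Ij j|)%N by apply/card_gt0P; exists i.
by rewrite eqn_leq Hle => ->.
Qed.

Variable Bj : forall j : J, {set lconf A Ij j}.

Lemma inB_ext (x y : conf A) : (forall i, x i = y i) -> inB Bj y -> inB Bj x.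
Proof.
move=> Exy Hy j jL; suff -> : restr Ij j x = restr Ij j y by apply: Hy.
by apply/ffunP => k; rewrite !ffunE Exy.
Qed.

Variable R : realType.
Implicit Types (p : pvar R A Ij) (g : gvar R A).

Lemma sum_marg p j i : i \in Ij j ->
  \sum_(a : A i) marg Bj p j a = \sum_(b in Bj j) p j b.
Proof.
move=> Hi; rewrite /marg (partition_big (fun b : lconf A Ij j => b (exist _ i Hi)) predT) //=.
by apply: eq_bigr => a _; apply: eq_bigl => b; rewrite (lc_atE _ Hi).
Qed.

Lemma p_int_point_mass p j : p_ok Bj p -> p_int Bj p -> j \in Lset Ij ->
  exists2 b0, b0 \in Bj j & forall b, b \in Bj j -> p j b = (b == b0)%:R.
Proof.
move=> [p_ge0 p_sum1] p_Z jL; have S := p_sum1 j jL.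
case: (pickP (fun b => (b \in Bj j) && (p j b != 0))) => [b0 /andP[Hb0 pb0]|p0]; last first.
  move: S; rewrite big1 => [/esym/eqP|b Hb]; first by rewrite oner_eq0.
  by move: (p0 b); rewrite Hb /= => /negbFE/eqP.
exists b0 => // b Hb.
have pb0_ge1 : 1 <= p j b0 by apply: int_gt0_ge1; rewrite ?p_Z // lt0r pb0 p_ge0.
move: S; rewrite (bigD1 b0) //=; set rest := (X in _ + X = _) => S.
have rest_ge0 : 0 <= rest by apply: sumr_ge0 => c /andP[Hc _]; apply: p_ge0.
have rest0 : rest = 0 by lra.
have [->|bb0] := eqVneq b b0; first by rewrite /= mulr1n; lra.
have p_off : forall c, (c \in Bj j) && (c != b0) -> p j c = 0.
  by apply: psumr_eq0P rest0 => d /andP[Hd _]; apply: p_ge0.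
by rewrite p_off ?Hb ?bb0.
Qed.

Lemma marg_point_mass p j b0 i (a : A i) :
  (forall b, b \in Bj j -> p j b = (b == b0)%:R) -> b0 \in Bj j ->
  marg Bj p j a = (lc_at b0 i == Some a)%:R.
Proof.
move=> pE Hb0; rewrite /marg (eq_bigr (fun b => (b == b0)%:R)) => [|b /andP[Hb _]].
  by rewrite sumr_indicator /= Hb0.
exact: pE.
Qed.

(* Normalisation of p_j recovers the marginal at a0 from the others. *)
Lemma eq_marg_off_point p j j' i (a0 : A i) : p_ok Bj p ->
  j \in Lset Ij -> j' \in Lset Ij -> i \in Ij j -> i \in Ij j' ->
  (forall a : A i, a != a0 -> marg Bj p j a = marg Bj p j' a) ->
  forall a : A i, marg Bj p j a = marg Bj p j' a.
Proof.
move=> [_ p_sum1] jL j'L Hi Hi' Eoff a.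
have [->|] := eqVneq a a0; last exact: Eoff.
have := sum_marg p Hi; have := sum_marg p Hi'.
rewrite !p_sum1 // (bigD1 a0) //= => E'; rewrite (bigD1 a0) //=.
by rewrite (eq_bigr _ Eoff) -E' => /addIr.
Qed.

End LocalConfigurations.

Section Relaxations.
Variable R : realType.
Variables (I J : finType) (A : I -> finType) (Ij : J -> {set I}).
Variable Bj : forall j : J, {set lconf A Ij j}.
Variables (h : gvar R A) (alpha : conf A) (t : I -> J).
Arguments h : clear implicits.
Hypothesis h_gt0 : forall i, i \in Yset Ij -> forall a : A i, 0 < h i a.
Hypothesis PY_inj : forall x y : conf A, inB Bj x -> inB Bj y ->
  (forall i, i \in Yset Ij -> x i = y i) -> x = y.
Hypothesis t_mem : forall i, i \notin Yset Ij -> t i \in Jset Ij i.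
Hypothesis cover_ex : forall i : I, exists j : J, (j \in Jset Ij i) && (j \in Lset Ij).
Implicit Types (p : pvar R A Ij) (g : gvar R A).

Definition cover i : J := xchoose (cover_ex i).

Lemma cover_L i : cover i \in Lset Ij.
Proof. by case/andP: (xchooseP (cover_ex i)). Qed.

Lemma mem_cover i : i \in Ij (cover i).
Proof. by case/andP: (xchooseP (cover_ex i)); rewrite inE. Qed.

(* The full marginal vector of p, read off at one covering factor per variable. *)
Definition gbar p i (a : A i) : R := marg Bj p (cover i) a.
Arguments gbar p i a : clear implicits.

Lemma QB_gbar g p : QB Bj g p -> forall i a, g i a = gbar p i a.
Proof. by move=> [_ gE] i a; apply: gE _ (cover_L i) _ (mem_cover i) a. Qed.

Lemma QB_sum1 g p i : QB Bj g p -> \sum_(a : A i) g i a = 1.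
Proof.
move=> HQ; rewrite (eq_bigr _ (fun a _ => QB_gbar HQ a)) /gbar sum_marg ?mem_cover //.
by case: HQ => -[_ p_sum1] _; apply: p_sum1 (cover_L i).
Qed.

Lemma QB_QA g p : QB Bj g p -> QA Bj alpha t g p.
Proof.
move=> [p_ok gE]; split=> //; split=> [i iY j|i iY j].
  by rewrite inE => Hij jL a _; apply: gE.
rewrite inE => Hij _ a _.
have Hti : i \in Ij (t i) by have := t_mem iY; rewrite inE.
have inL k : i \in Ij k -> k \in Lset Ij.
  by move=> Hik; apply: contraR iY; apply: notin_Lset_Yset.
by rewrite -(gE j (inL _ Hij) i Hij) -(gE (t i) (inL _ Hti) i Hti).
Qed.

Lemma QA_marg g p j i : QA Bj alpha t g p -> j \in Lset Ij -> i \in Ij j ->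
  forall a, a != alpha i ->
  marg Bj p j a = if i \in Yset Ij then g i a else marg Bj p (t i) a.
Proof.
move=> [_ [gY consN]] jL Hij a Ha; have jJ : j \in Jset Ij i by rewrite inE.
case: ifPn => iY; first by rewrite (gY i iY j jJ jL a Ha).
by have [->|jt] := eqVneq j (t i); last apply: consN.
Qed.

Lemma QA_QB g p : QA Bj alpha t g p -> QB Bj (gbar p) p.
Proof.
move=> HQ; have p_ok : p_ok Bj p by case: HQ.
split=> // j jL i Hij a.
apply: (eq_marg_off_point (a0 := alpha i) p_ok (cover_L i) jL (mem_cover i) Hij) => a' Ha'.
by rewrite (QA_marg HQ jL Hij Ha') (QA_marg HQ (cover_L i) (mem_cover i) Ha').
Qed.

Lemma QA_gbar g p : QA Bj alpha t g p ->
  forall i, i \in Yset Ij -> forall a, a != alpha i -> gbar p i a = g i a.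
Proof. by move=> HQ i iY a Ha; rewrite /gbar (QA_marg HQ (cover_L i) (mem_cover i) Ha) iY. Qed.

Lemma objB_objA g p : QB Bj g p ->
  objB Ij h g = \sum_(i in Yset Ij) ln (h i (alpha i)) + objA Ij h alpha g.
Proof.
move=> HQ; rewrite /objB /objA -big_split /=; apply: eq_bigr => i iY.
have := QB_sum1 i HQ; rewrite (bigD1 (alpha i)) //= => gsum.
rewrite (bigD1 (alpha i)) //=.
have -> : g i (alpha i) = 1 - \sum_(a | a != alpha i) g i a by rewrite -gsum addrK.
under [in RHS]eq_bigr => a _ do rewrite ln_div ?posrE ?h_gt0 // mulrBl.
by rewrite sumrB -mulr_sumr; ring.
Qed.

Lemma eq_objA g g' :
  (forall i, i \in Yset Ij -> forall a, a != alpha i -> g i a = g' i a) ->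
  objA Ij h alpha g = objA Ij h alpha g'.
Proof. by move=> E; apply: eq_bigr => i iY; apply: eq_bigr => a Ha; rewrite E. Qed.

Lemma eq_intA g g' p :
  (forall i, i \in Yset Ij -> forall a, a != alpha i -> g i a = g' i a) ->
  (intA Bj alpha g p <-> intA Bj alpha g' p).
Proof.
move=> E; split=> -[g_Z p_Z]; split=> // i iY a Ha.
  by rewrite -E //; apply: g_Z.
by rewrite E //; apply: g_Z.
Qed.

Lemma eq_outA g g' p x :
  (forall i, i \in Yset Ij -> forall a, a != alpha i -> g i a = g' i a) ->
  (outA Bj alpha g p x <-> outA Bj alpha g' p x).
Proof.
move=> E; rewrite /outA (eq_intA _ E); split=> -[g_Z [xB gx]]; split=> //; split=> // i iY a Ha.
  by rewrite -E //; apply: gx.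
by rewrite E //; apply: gx.
Qed.

Lemma QB_intA_intB g p : QB Bj g p -> (intA Bj alpha g p <-> intB Bj g p).
Proof.
move=> HQ; split=> [[_ p_Z]|[g_Z p_Z]]; last by split=> // i _ a _; apply: g_Z.
split=> // i a; rewrite (QB_gbar HQ) /gbar /marg.
by apply: rpred_sum => b /andP[Hb _]; apply: p_Z (cover_L i) b Hb.
Qed.

Lemma QB_int_indicator g p : QB Bj g p -> p_int Bj p ->
  exists y : conf A, inB Bj y /\ forall i a, g i a = (y i == a)%:R.
Proof.
move=> HQ p_Z; have p_ok : p_ok Bj p by case: HQ.
have g_local j : j \in Lset Ij -> exists2 b0, b0 \in Bj j &
    forall i (Hi : i \in Ij j) a, g i a = (b0 (exist _ i Hi) == a)%:R.
  move=> jL; have [b0 Hb0 pE] := p_int_point_mass p_ok p_Z jL.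
  exists b0 => // i Hi a; case: HQ => _ gE.
  by rewrite (gE j jL i Hi a) (marg_point_mass _ pE Hb0) (lc_atE _ Hi).
pose y : conf A := fun i => odflt (alpha i) [pick a | g i a == 1].
have gy i a : g i a = (y i == a)%:R.
  have [b0 _ gE] := g_local _ (cover_L i).
  move: (gE i (mem_cover i)); set c := b0 _ => gc.
  rewrite /y; case: pickP => [a'|/(_ c)]; last by rewrite /= gc eqxx eqxx.
  by rewrite gc => /eqP/(@boolr_eq1 R)/eqP <-.
exists y; split=> // j jL; have [b0 Hb0 gE] := g_local _ jL.
suff -> : restr Ij j y = b0 by [].
apply/ffunP => -[i Hi]; rewrite ffunE /=.
by apply: (@indicator_inj R) => a; rewrite -gy (gE i Hi).
Qed.

Lemma QB_outB_inB g p x : QB Bj g p -> outB Bj g p x -> inB Bj x.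
Proof.
move=> HQ [g_Z gx]; have [y [yB gy]] := QB_int_indicator HQ g_Z.2.
by apply: (inB_ext _ yB) => i; apply: (@indicator_inj R) => a; rewrite -gx -gy.
Qed.

(* Off alpha_i the indicator of x_i still determines x_i, and P_Y is injective on B. *)
Lemma QB_outA_outB g p x : QB Bj g p -> (outA Bj alpha g p x <-> outB Bj g p x).
Proof.
move=> HQ; split=> [[g_Z [xB gx]]|[g_Z gx]].
  have {}g_Z : intB Bj g p by apply/(QB_intA_intB HQ).
  have [y [yB gy]] := QB_int_indicator HQ g_Z.2.
  suff Exy : x = y by split=> // i a; rewrite gy Exy.
  apply: PY_inj => // i iY.
  have [xa|xa] := eqVneq (x i) (alpha i).
    have [ya|ya] := eqVneq (y i) (alpha i); first by rewrite xa ya.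
    by apply/eqP/(@boolr_eq1 R); rewrite -(gx i iY (y i) ya) gy eqxx.
  by apply/esym/eqP/(@boolr_eq1 R); rewrite -gy (gx i iY (x i) xa) eqxx.
split; first by apply/(QB_intA_intB HQ).
by split=> [|i _ a _]; [apply: QB_outB_inB HQ (conj g_Z gx) | apply: gx].
Qed.

Definition gconf (y : conf A) : gvar R A := fun i a => (y i == a)%:R.
Definition pconf (y : conf A) : pvar R A Ij := fun j b => (b == restr Ij j y)%:R.
Arguments gconf y i a : clear implicits.
Arguments pconf y j b : clear implicits.

Lemma QB_conf (y : conf A) : inB Bj y -> QB Bj (gconf y) (pconf y).
Proof.
move=> yB; split; first split=> [j _ b _|j jL]; first by rewrite ler0n.
  by rewrite sumr_indicator yB.
move=> j jL i Hij a; have pE b : b \in Bj j -> pconf y j b = (b == restr Ij j y)%:R by [].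
by rewrite (marg_point_mass a pE (yB j jL)) lc_at_restr.
Qed.

Lemma objB_conf (y : conf A) : objB Ij h (gconf y) = score Ij h y.
Proof. by apply: eq_bigr => i _; rewrite sumr_mul_indicator. Qed.

Lemma optB_optA g p : optB Bj h g p -> optA Bj h alpha t g p.
Proof.
move=> [HQ g_opt]; split=> [|g' p' HQ']; first exact: QB_QA.
have HQB' := QA_QB HQ'.
move: (g_opt _ _ HQB'); rewrite (objB_objA HQB') (objB_objA HQ) lerD2l.
by rewrite (@eq_objA g' (gbar p')) // => i iY a Ha; rewrite (QA_gbar HQ').
Qed.

Lemma optA_optB g p : optA Bj h alpha t g p -> optB Bj h (gbar p) p.
Proof.
move=> [HQ g_opt]; have HQB := QA_QB HQ; split=> // g' p' HQ'.
rewrite (objB_objA HQ') (objB_objA HQB) lerD2l (@eq_objA (gbar p) g).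
  exact: g_opt (QB_QA HQ').
exact: QA_gbar.
Qed.

Lemma optB_out_opt g p x : optB Bj h g p -> outB Bj g p x -> is_opt_conf Bj h x.
Proof.
move=> [HQ g_opt] xout; split=> [|y yB]; first exact: QB_outB_inB HQ xout.
rewrite -objB_conf.
have -> : score Ij h x = objB Ij h g.
  by rewrite -objB_conf; apply: eq_bigr => i _; apply: eq_bigr => a _; rewrite xout.2.
exact: g_opt _ _ (QB_conf yB).
Qed.

End Relaxations.

Theorem theorem1 (R : realType) (I J : finType) (A : I -> finType)
  (Ij : J -> {set I}) (Bj : forall j : J, {set lconf A Ij j})
  (h : gvar R A) (alpha : conf A) (t : I -> J)
  (hA : forall i : I, (1 < #|A i|)%N)
  (hh : forall i, i \in Yset Ij -> forall a : A i, 0 < h i a)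
  (hinj : forall x y : conf A, inB Bj x -> inB Bj y ->
            (forall i, i \in Yset Ij -> x i = y i) -> x = y)
  (ht : forall i, i \notin Yset Ij -> t i \in Jset Ij i)
  (hcov : forall i : I, exists j : J, (j \in Jset Ij i) && (j \in Lset Ij)) :
  (forall (g : gvar R A) (p : pvar R A Ij), optB Bj h g p ->
     optA Bj h alpha t g p /\
     (intA Bj alpha g p <-> intB Bj g p) /\
     (forall x, outA Bj alpha g p x <-> outB Bj g p x)) /\
  (forall (g : gvar R A) (p : pvar R A Ij), optA Bj h alpha t g p ->
     exists g' : gvar R A,
       (forall i, i \in Yset Ij -> forall a : A i, a != alpha i -> g' i a = g i a) /\
       optB Bj h g' p /\
       (intA Bj alpha g p <-> intB Bj g' p) /\
       (forall x, outA Bj alpha g p x <-> outB Bj g' p x)) /\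
  (forall (g : gvar R A) (p : pvar R A Ij), optB Bj h g p ->
     (intB Bj g p -> exists x, outB Bj g p x) /\
     (forall x, outB Bj g p x -> is_opt_conf Bj h x)).
Proof.
split; [|split].
- move=> g p gopt; have HQ := gopt.1.
  split; first exact: (optB_optA alpha hh ht hcov gopt).
  split=> [|x]; first exact: (QB_intA_intB alpha hcov HQ).
  exact: (QB_outA_outB alpha hinj hcov x HQ).
- move=> g p gopt; have gE := QA_gbar hcov gopt.1; exists (gbar Bj hcov p).
  have HQ := QA_QB hcov gopt.1.
  split=> //; split; first exact: (optA_optB hh ht hcov gopt).
  split=> [|x]; rewrite -?(eq_outA Bj p x gE) -?(eq_intA Bj p gE).
    exact: (QB_intA_intB alpha hcov HQ).
  exact: (QB_outA_outB alpha hinj hcov x HQ).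
- move=> g p gopt; split=> [g_Z|x]; last exact: (optB_out_opt alpha hcov gopt).
  by have [x [_ gx]] := QB_int_indicator alpha hcov gopt.1 g_Z.2; exists x.
Qed.
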